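(* Let $\mathcal F$ be a saturated fusion system over a finite $p$-group $S$, let $H\le S$ be fully $\mathcal F$-normalized and $\mathcal F$-centric, $N_{\mathcal F}=N_{\mathcal F}(H)$, and let $K\in\mathcal F^c$. For every $(A,\overline\varphi)\in[N_{\mathcal F}\times K]$ we have $A=N^{N_{\mathcal F}}_{\overline\varphi}\cap H$.
   Context: Fusion system $\mathcal F$ over $S$: objects the subgroups of $S$, morphisms injective homomorphisms containing conjugations $c_s:x\mapsto sxs^{-1}$ ($s\in S$), each morphism's isomorphism onto its image and its inverse in $\mathcal F$; saturated. $\operatorname{Aut}_T(P)=\{c_x|_P:x\in N_T(P)\}$. Fully $\mathcal F$-normalized: $|N_S(P')|\le|N_S(P)|$ for all $P'$ $\mathcal F$-isomorphic to $P$ (likewise for other fusion systems). $\mathcal F$-centric: $C_S(P')\le P'$ for all such $P'$; $\mathcal F^c$ the set of these. $N_{\mathcal F}(H)$: fusion system over $N_S:=N_S(H)$ whose morphisms $A\to B$ are the $\varphi\in\operatorname{Hom}_{\mathcal F}(A,B)$ extending to a morphism $AH\to BH$ in $\mathcal F$. Orbit category: $\operatorname{Hom}_{\mathcal O(\mathcal F)}(P,Q)=\operatorname{Aut}_Q(Q)\backslash\operatorname{Hom}_{\mathcal F}(P,Q)$, $\overline\varphi$ the class of $\varphi$. $[H\times_{\mathcal F}K]$: among pairs $(A,\overline\varphi)$, $A\in\mathcal F^c$, $A\le H$, $\overline\varphi\in\operatorname{Hom}_{\mathcal O(\mathcal F)}(A,K)$, put $(A,\overline\varphi)\precsim(B,\overline\psi)$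 iff some $h\in H$ has $h^{-1}Ah\le B$ and $\overline\varphi\,\overline{c_h}=\overline\psi\,\overline\iota$; $[H\times_{\mathcal F}K]$ has one representative of each mutual-$\precsim$ class of maximal pairs. For $A,K\in\mathcal F^c$ with $A\le N_S$ and $\varphi\in\operatorname{Hom}_{\mathcal F}(A,K)$: ${}^{N_{\mathcal F}}_{\varphi}N=\{x\in N_K(\varphi(A)):\varphi^{-1}c_x\varphi\in\operatorname{Aut}_{N_{\mathcal F}}(A)\}$; $\varphi$ is an $N_{\mathcal F}$-top if $A$ is fully $N_{\mathcal F}$-normalized and, with $N^{N_{\mathcal F}}_\varphi=\{x\in N_{N_S}(A):c_x\in\varphi^{-1}\operatorname{Aut}_{{}^{N_{\mathcal F}}_{\varphi}N}(\varphi(A))\varphi\}$, $\operatorname{Aut}_{{}^{N_{\mathcal F}}_{\varphi}N}(\varphi(A))=\varphi\operatorname{Aut}_{N^{N_{\mathcal F}}_\varphi}(A)\varphi^{-1}$. This property and $N^{N_{\mathcal F}}_\varphi$ depend only on $\overline\varphi$; write $N^{N_{\mathcal F}}_{\overline\varphi}$. $[N_{\mathcal F}\times K]\subseteq[H\times_{\mathcal F}K]$: one representative of each class of the relation $(A,\overline\varphi)\sim(B,\overline\psi)$ iff $\overline\varphi=\overline\psi\,\overline\theta$ for an isomorphism $\overline\theta:B\to A$ in $\mathcal O(N_{\mathcal F})$, chosen with $A$ fully $N_{\mathcal F}$-normalized and $\overline\varphi$ represented by an $N_{\mathcal F}$-top. *)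

From HB Require Import structures.
From mathcomp Require Import all_boot all_fingroup all_solvable.
Set Implicit Arguments. Unset Strict Implicit. Unset Printing Implicit Defensive.
Local Open Scope group_scope.

(* Morphisms are finite functions gT -> gT; a morphism "defined on P" is
   normalized to be the identity outside P. *)
Definition restrict (gT : finGroupType) (P : {set gT}) (f : gT -> gT)
  : {ffun gT -> gT} := [ffun x => if x \in P then f x else x].

(* The paper's conjugation c_s : x |-> s x s^-1  (MathComp: x ^ y = y^-1 x y). *)
Definition cmap (gT : finGroupType) (s : gT) : gT -> gT := fun x => x ^ s^-1.

(* A fusion system over S.  fhom P is Hom_F(P, S); Hom_F(P,Q) is the subset of
   maps with image in Q.  Objects are the subgroups of S. *)
Record fusion_system (gT : finGroupType) (S : {group gT}) := FusionSystem {
  fhom : {set gT} -> {set {ffun gT -> gT}};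
  fhom_sub : forall P f, f \in fhom P ->
    [/\ group_set P, P \subset S, f @: P \subset S,
        {in P &, {morph f : x y / x * y}} & {in P &, injective f}];
  fhom_out : forall P f, f \in fhom P -> forall x, x \notin P -> f x = x;
  fhom_conj : forall (P : {group gT}) s, P \subset S -> s \in S ->
    restrict P (cmap s) \in fhom P;
  fhom_inv : forall P f, f \in fhom P ->
    exists2 g, g \in fhom (f @: P) & {in P, cancel f g};
  fhom_comp : forall P Q f g, f \in fhom P -> g \in fhom Q -> f @: P \subset Q ->
    restrict P (fun x => g (f x)) \in fhom P
}.

Section Defs.
Variables (gT : finGroupType) (S : {group gT}) (F : fusion_system S).

Definition Hom (P Q : {set gT}) := [set f in fhom F P | f @: P \subset Q].
Definition AutF (P : {set gT}) := [set f in fhom F P | f @: P == P].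
Definition AutT (T P : {set gT}) := [set restrict P (cmap x) | x in 'N_T(P)].

Definition fully_normalized (P : {set gT}) :=
  (P \subset S) && [forall f in fhom F P, #|'N_S(f @: P)| <= #|'N_S(P)|].
Definition fully_centralized (P : {set gT}) :=
  (P \subset S) && [forall f in fhom F P, #|'C_S(f @: P)| <= #|'C_S(P)|].
Definition centric (P : {set gT}) :=
  (P \subset S) && [forall f in fhom F P, 'C_S(f @: P) \subset f @: P].

Definition Nphi (P : {set gT}) (f : {ffun gT -> gT}) :=
  [set g in 'N_S(P) | [exists h in 'N_S(f @: P),
      [forall a in P, f (cmap g a) == cmap h (f a)]]].

(* Saturation (Sylow axiom + extension axiom). *)
Definition saturated (p : nat) : Prop :=
  (forall P : {group gT}, P \subset S -> fully_normalized P ->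
     fully_centralized P /\
     [/\ AutT S P \subset AutF P, p.-nat #|AutT S P|
       & p^'.-nat (#|AutF P| %/ #|AutT S P|)])
  /\
  (forall (P : {group gT}) f, f \in fhom F P -> fully_centralized (f @: P) ->
     exists2 g, g \in fhom F (Nphi P f) & {in P, g =1 f}).

Variables (H K : {set gT}).
Let NS := 'N_S(H).

Definition NF_hom (A B : {set gT}) :=
  [set f in Hom A B | [&& A \subset NS, B \subset NS &
      [exists g in Hom (A * H) (B * H), [forall a in A, g a == f a]]]].
Definition NF_Aut (A : {set gT}) := [set f in NF_hom A A | f @: A == A].
Definition NF_isomorphic (A A' : {set gT}) :=
  [exists f in NF_hom A A', f @: A == A'].
Definition NF_fully_normalized (A : {set gT}) :=
  (A \subset NS) &&
  [forall A' : {set gT}, NF_isomorphic A A' ==> (#|'N_NS(A')| <= #|'N_NS(A)|)].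

(* Orbit category: the class  Aut_Q(Q) o phi  of phi : P -> Q. *)
Definition ocls (P Q : {set gT}) (f : gT -> gT) :=
  [set restrict P (fun x => cmap q (f x)) | q in Q].

Definition Nleft (A : {set gT}) (f : {ffun gT -> gT}) :=
  [set x in 'N_K(f @: A) | [exists al in NF_Aut A,
      [forall a in A, f (al a) == cmap x (f a)]]].
Definition NF_N (A : {set gT}) (f : {ffun gT -> gT}) :=
  [set x in 'N_NS(A) | [exists y in Nleft A f,
      [forall a in A, f (cmap x a) == cmap y (f a)]]].

Definition finv (A : {set gT}) (f : gT -> gT) : {ffun gT -> gT} :=
  [ffun b => odflt b [pick a in A | f a == b]].
Definition conjby (A : {set gT}) (f g : gT -> gT) :=
  restrict (f @: A) (fun b => f (g (finv A f b))).

Definition NF_top (A : {set gT}) (f : {ffun gT -> gT}) :=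
  NF_fully_normalized A &&
  (AutT (Nleft A f) (f @: A) ==
     [set conjby A f g | g : {ffun gT -> gT} in AutT (NF_N A f) A]).

(* pairs (A, phibar), phibar in Hom_{O(F)}(A,K) *)
Definition pairT := ({set gT} * {set {ffun gT -> gT}})%type.
Definition is_pair (pc : pairT) :=
  [&& group_set pc.1, centric pc.1, pc.1 \subset H &
      [exists f in Hom pc.1 K, pc.2 == ocls pc.1 K f]].
Definition pair_le (pc qc : pairT) :=
  [exists h in H, (pc.1 :^ h \subset qc.1) &&
     [exists f in pc.2, exists g in qc.2,
        ocls (pc.1 :^ h) K (fun x => f (cmap h x)) == ocls (pc.1 :^ h) K g]].
Definition maximal_pair (pc : pairT) :=
  is_pair pc &&
  [forall qc : pairT, is_pair qc ==> pair_le pc qc ==> pair_le qc pc].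
Definition mutual (pc qc : pairT) := pair_le pc qc && pair_le qc pc.

Definition is_HxFK (R : {set pairT}) : Prop :=
  (forall pc, pc \in R -> maximal_pair pc) /\
  (forall pc, maximal_pair pc -> #|[set qc in R | mutual pc qc]| = 1%N).

Definition sim (pc qc : pairT) :=
  [exists th in NF_hom pc.1 qc.1, exists et in NF_hom qc.1 pc.1,
     [&& ocls pc.1 pc.1 (fun x => et (th x)) == ocls pc.1 pc.1 id,
         ocls qc.1 qc.1 (fun x => th (et x)) == ocls qc.1 qc.1 id &
         [exists g in qc.2, pc.2 == ocls pc.1 K (fun x => g (th x))]]].

Definition is_NFxK (R R' : {set pairT}) : Prop :=
  [/\ R' \subset R,
      (forall pc, pc \in R -> #|[set qc in R' | sim pc qc]| = 1%N) &
      (forall pc, pc \in R' -> NF_fully_normalized pc.1 /\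
                               exists2 f, f \in pc.2 & NF_top pc.1 f)].

End Defs.

(* Only the maximality of (A, phibar) in [H x_F K] is used.  For a in A the
   conjugation c_a lies in Aut_{N_F}(A) (it extends to c_a on AH = H) and phi
   carries it to c_{phi a}, so A <= N_phi.  Conversely, for x in N_phi \cap H
   the extension axiom extends phi to psi on a group containing A and x; if y
   in K realises phi c_x phi^-1, then y^-1 psi(x) centralises phi(A), so it lies
   in phi(A) <= K because A is centric.  Hence psi maps B = <A, x> into K, and
   (B, psibar|_B) is a pair above (A, phibar); maximality gives |B| <= |A|, so
   x lies in A. *)

From mathcomp Require Import all_boot all_fingroup all_solvable.
Set Implicit Arguments. Unset Strict Implicit. Unset Printing Implicit Defensive.
Local Open Scope group_scope.

Lemma cmap1 (gT : finGroupType) (x : gT) : cmap 1 x = x.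
Proof. by rewrite /cmap invg1 conjg1. Qed.

Lemma imset_restrict (gT : finGroupType) (P : {set gT}) (g : gT -> gT) :
  restrict P g @: P = g @: P.
Proof. by apply: eq_in_imset => z zP; rewrite ffunE zP. Qed.

Section FusionMorphisms.
Variables (gT : finGroupType) (S : {group gT}) (F : fusion_system S).
Implicit Types (P Q A B : {group gT}) (N X : {set gT}).
Implicit Types (f g psi : {ffun gT -> gT}).

Lemma fhom_restrict P Q g :
  g \in fhom F Q -> P \subset Q -> restrict P g \in fhom F P.
Proof.
move=> gQ sPQ; have [_ sQS _ _ _] := fhom_sub gQ.
have idP : restrict P id \in fhom F P.
  have -> : restrict P id = restrict P (cmap 1).
    by apply/ffunP => z; rewrite !ffunE cmap1.
  exact: fhom_conj (subset_trans sPQ sQS) (group1 S).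
have sidP : restrict P id @: P \subset Q by rewrite imset_restrict imset_id.
have -> : restrict P g = restrict P (fun x => g (restrict P id x)).
  by apply/ffunP => z; rewrite !ffunE; case: ifP => // ->.
exact: fhom_comp idP gQ sidP.
Qed.

Lemma fhom_imset_group P f : f \in fhom F P -> group_set (f @: P).
Proof.
move=> fP; have [_ _ _ fM _] := fhom_sub fP.
by rewrite -(morphimEdom (Morphism fM)) groupP.
Qed.

Lemma fhom_norm_imset P f x : f \in fhom F P -> x \in P -> f x \in 'N(f @: P).
Proof.
move=> fP xP; have gfP := fhom_imset_group fP.
exact: subsetP (normG (Group gfP)) _ (imset_f _ xP).
Qed.

Lemma fhom_cmap (P : {set gT}) f x a : f \in fhom F P -> x \in P -> a \in P ->
  f (cmap x a) = cmap (f x) (f a).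
Proof.
move=> fP xP aP; have [gP _ _ fM _] := fhom_sub fP.
pose G := Group gP; have xG : x \in G := xP; have aG : a \in G := aP.
pose fm := @Morphism _ _ G f fM.
have fV : f x^-1 = (f x)^-1 := morphV fm xG.
by rewrite /cmap -fV; apply: (morphJ fm aG (groupVr xG)).
Qed.

Lemma fhom_cent_imset P f u : f \in fhom F P -> u \in P ->
  f u \in 'C(f @: P) -> u \in 'C(P).
Proof.
move=> fP uP /centP cfu; have [_ _ _ fM fI] := fhom_sub fP.
apply/centP => v vP; apply: fI; rewrite ?groupM //.
by rewrite !fM // cfu ?imset_f.
Qed.

Lemma centric_fully_centralized A f :
  centric F A -> f \in fhom F A -> fully_centralized F (f @: A).
Proof.
move=> /andP [_ /forall_inP cA] fA; have [_ _ fAS _ _] := fhom_sub fA.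
rewrite /fully_centralized fAS; apply/forall_inP => g gfA.
have gfAg := fhom_imset_group fA; pose X := Group gfAg.
have [_ _ _ _ gI] := fhom_sub gfA.
have := cA _ (fhom_comp fA gfA (subxx _)).
rewrite imset_restrict (imset_comp g f) => sCg.
have [g' g'gX g'K] := fhom_inv gfA; have [_ _ _ _ g'I] := fhom_sub g'gX.
rewrite -(card_in_imset (sub_in2 (subsetP sCg) g'I)).
apply/subset_leq_card/subsetP => _ /imsetP [w wC ->].
have /imsetP [u uX wE] := subsetP sCg w wC.
case/setIP: wC => _; rewrite wE g'K // inE (subsetP fAS _ uX) /=.
exact: (fhom_cent_imset (P := X)).
Qed.

Lemma centricS A B : centric F A -> A \subset B -> B \subset S -> centric F B.
Proof.
move=> /andP [_ /forall_inP cA] sAB sBS; rewrite /centric sBS.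
apply/forall_inP => g gB; have := cA _ (fhom_restrict gB sAB).
rewrite imset_restrict => sCgA.
apply: subset_trans (subset_trans sCgA (imsetS _ sAB)).
exact/setIS/centS/imsetS.
Qed.

Lemma fhom_imset_gen_sub N X (K : {group gT}) psi :
  psi \in fhom F N -> X \subset N -> psi @: X \subset K ->
  psi @: <<X>> \subset K.
Proof.
move=> psiN sXN psiXK; have [gN _ _ psiM _] := fhom_sub psiN.
pose G := Group gN; pose pm := @Morphism _ _ G psi psiM.
have sXG : <<X>> \subset G by rewrite gen_subG.
by rewrite -(morphimEsub pm sXG) morphim_gen // (morphimEsub pm sXN) gen_subG.
Qed.

Lemma sub_Nphi A f : f \in fhom F A -> A \subset Nphi S A f.
Proof.
move=> fA; have [_ sAS fAS _ _] := fhom_sub fA.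
apply/subsetP => x xA; rewrite inE inE (subsetP sAS) // (subsetP (normG A)) //=.
apply/exists_inP; exists (f x).
  by rewrite inE (subsetP fAS _ (imset_f _ xA)) (fhom_norm_imset fA xA).
by apply/forall_inP => a aA; rewrite (fhom_cmap fA xA aA).
Qed.

Lemma extension_cent_defect A N f psi x y :
  psi \in fhom F N -> A \subset N -> {in A, psi =1 f} ->
  x \in N -> x \in 'N(A) -> y \in S ->
  {in A, forall a, f (cmap x a) = cmap y (f a)} ->
  y^-1 * psi x \in 'C_S(f @: A).
Proof.
move=> psiN sAN psiE xN xNA yS fxy; have [_ _ psiS _ _] := fhom_sub psiN.
rewrite inE groupM ?groupV ?(subsetP psiS _ (imset_f _ xN)) //=.
apply/centP => _ /imsetP [a aA ->].
have xaA : cmap x a \in A by rewrite /cmap memJ_norm ?groupV.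
have : cmap (psi x) (f a) = cmap y (f a).
  by rewrite -fxy // -(psiE _ aA) -(fhom_cmap psiN xN (subsetP sAN a aA)) psiE.
rewrite /cmap => /(canRL (conjgK _)); rewrite -conjgM => fa_fix.
by apply/esym/commgP/conjg_fixP; rewrite {2}fa_fix invgK.
Qed.

End FusionMorphisms.

Section NormalizerSubsystem.
Variables (gT : finGroupType) (S : {group gT}) (F : fusion_system S).
Variables (H K : {group gT}).
Hypotheses (sHS : H \subset S) (sKS : K \subset S).
Implicit Types (A B : {group gT}) (f g psi : {ffun gT -> gT}).

Lemma ocls_Hom A f0 f :
  f0 \in Hom F A K -> f \in ocls A K f0 -> f \in Hom F A K.
Proof.
rewrite !inE => /andP [f0A f0AK] /imsetP [q qK ->].
rewrite imset_restrict andbC; apply/andP; split.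
  apply/subsetP => _ /imsetP [a aA ->].
  by rewrite /cmap groupJ ?groupV ?(subsetP f0AK _ (imset_f _ aA)).
have -> : restrict A (fun a => cmap q (f0 a))
          = restrict A (fun a => restrict K (cmap q) (f0 a)).
  apply/ffunP => z; rewrite !ffunE.
  by case: ifP => // zA; rewrite (subsetP f0AK _ (imset_f _ zA)).
exact: fhom_comp f0A (fhom_conj F sKS (subsetP sKS q qK)) f0AK.
Qed.

Lemma NF_Aut_conj A x :
  A \subset H -> x \in 'N_H(A) -> restrict A (cmap x) \in NF_Aut F H A.
Proof.
move=> sAH /setIP [xH xNA]; have xS := subsetP sHS x xH.
have sAS := subset_trans sAH sHS.
have conjE (G : {group gT}) : x \in 'N(G) -> restrict G (cmap x) @: G = G.
  by move=> xNG; rewrite imset_restrict; apply/normP; rewrite groupV.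
have sANH : A \subset 'N_S(H).
  apply/subsetP => a aA.
  by rewrite inE (subsetP sAS) ?(subsetP (normG H)) ?(subsetP sAH).
rewrite !inE fhom_conj // conjE // eqxx subxx sANH /= andbT (mulSGid sAH).
apply/exists_inP; exists (restrict H (cmap x)).
  by rewrite inE fhom_conj // conjE ?subxx ?(subsetP (normG H) _ xH).
by apply/forall_inP => a aA; rewrite !ffunE aA (subsetP sAH).
Qed.

Lemma sub_NF_N A f : A \subset H -> f \in Hom F A K -> A \subset NF_N F H K A f.
Proof.
rewrite inE => sAH /andP [fA fAK]; have sAS := subset_trans sAH sHS.
apply/subsetP => x xA.
have xNSA : x \in 'N_('N_S(H))(A).
  rewrite !in_setI (subsetP sAS) ?(subsetP (normG H)) ?(subsetP sAH) //.
  exact: subsetP (normG A) x xA.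
rewrite inE xNSA /=.
apply/exists_inP; exists (f x); last first.
  by apply/forall_inP => a aA; rewrite (fhom_cmap fA xA aA).
rewrite inE in_setI (subsetP fAK _ (imset_f _ xA)) (fhom_norm_imset fA xA) /=.
apply/exists_inP; exists (restrict A (cmap x)).
  by apply: NF_Aut_conj; rewrite // in_setI (subsetP sAH) ?(subsetP (normG A)).
by apply/forall_inP => a aA; rewrite ffunE aA (fhom_cmap fA xA aA).
Qed.

Lemma NF_N_sub_Nphi A f : NF_N F H K A f \subset Nphi S A f.
Proof.
apply/subsetP => x /setIdP [/setIP [/setIP [xS _] xNA]].
case/exists_inP => y /setIdP [/setIP [yK yNfA] _] fxy.
apply/setIdP; split; first exact/setIP.
by apply/exists_inP; exists y; rewrite // in_setI (subsetP sKS).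
Qed.

Lemma NF_N_extension_mem A f psi x :
  centric F A -> f \in Hom F A K ->
  psi \in fhom F (Nphi S A f) -> {in A, psi =1 f} ->
  x \in NF_N F H K A f -> psi x \in K.
Proof.
rewrite inE => /andP [_ /forall_inP cA] /andP [fA fAK] psiN psiE xN.
have xNphi := subsetP (NF_N_sub_Nphi A f) x xN.
case/setIdP: xN => /setIP [_ xNA].
case/exists_inP => y /setIdP [/setIP [yK _] _] /forall_inP fxy.
have defect := extension_cent_defect psiN (sub_Nphi fA) psiE xNphi xNA
  (subsetP sKS y yK) (fun a aA => eqP (fxy a aA)).
by rewrite -(mulKVg y (psi x)) groupM // (subsetP fAK) // (subsetP (cA _ fA)).
Qed.

Lemma is_pair_fhom B psi : centric F B -> B \subset H ->
  psi \in fhom F B -> psi @: B \subset K ->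
  is_pair F H K (gval B, ocls B K psi).
Proof.
move=> cB sBH psiB psiBK; rewrite /is_pair /= groupP cB sBH /=.
by apply/exists_inP; exists psi; rewrite // inE psiB psiBK.
Qed.

Lemma pair_le_extension (A B : {set gT}) (Phi : {set {ffun gT -> gT}}) f g :
  A \subset B -> f \in Phi -> {in A, g =1 f} ->
  pair_le H K (A, Phi) (B, ocls B K g).
Proof.
move=> sAB fPhi gE; apply/exists_inP; exists 1; rewrite ?group1 //=.
rewrite conjsg1 sAB /=.
apply/exists_inP; exists f => //.
apply/exists_inP; exists (restrict B (fun z => cmap 1 (g z))).
  exact: imset_f.
apply/eqP/eq_imset => q; apply/ffunP => z; rewrite !ffunE.
by case: ifP => // zA; rewrite (subsetP sAB) // !cmap1 gE.
Qed.

Lemma maximal_pair_card pc qc : maximal_pair F H K pc -> is_pair F H K qc ->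
  pair_le H K pc qc -> #|qc.1| <= #|pc.1|.
Proof.
case/andP=> _ /forallP /(_ qc) maxpc qpair le_pq.
move: maxpc; rewrite qpair le_pq => /exists_inP [h _ /andP [sqp _]].
by rewrite -(cardJg _ h) subset_leq_card.
Qed.

Lemma maximal_pair_NF_N p (A : {group gT}) Phi f : saturated F p ->
  maximal_pair F H K (gval A, Phi) -> f \in Phi ->
  gval A = NF_N F H K A f :&: H.
Proof.
move=> [_ extend] maxA fPhi.
have /andP [/and4P [_ cA sAH /exists_inP [f0 f0AK /eqP PhiE]] _] := maxA.
have fAK : f \in Hom F A K by apply: (ocls_Hom f0AK); rewrite -PhiE.
have /setIdP [fA fAK'] := fAK.
apply/eqP; rewrite eqEsubset subsetI sub_NF_N // sAH /=.
apply/subsetP => x /setIP [xN xH]; apply: contraT => xA.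
have [psi psiN psiE] := extend A f fA (centric_fully_centralized cA fA).
have [gN _ _ _ _] := fhom_sub psiN; pose N := Group gN.
have psiN' : psi \in fhom F N := psiN.
have xNphi := subsetP (NF_N_sub_Nphi A f) x xN.
have sxAN : x |: A \subset N by rewrite subUset sub1set xNphi (sub_Nphi fA).
pose B := <<x |: A>>%G.
have sAB : A \subset B by rewrite sub_gen // subsetUr.
have sBH : B \subset H by rewrite gen_subG subUset sub1set xH.
have sBN : B \subset N by rewrite gen_subG.
have psiBK : psi @: B \subset K.
  apply: (fhom_imset_gen_sub psiN sxAN).
  rewrite imsetU imset_set1 subUset sub1set.
  rewrite (NF_N_extension_mem cA fAK psiN psiE xN).
  by rewrite (eq_in_imset psiE).
have cB : centric F B := centricS cA sAB (subset_trans sBH sHS).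
have pairB : is_pair F H K (gval B, ocls B K (restrict B psi)).
  apply: is_pair_fhom cB sBH (fhom_restrict psiN' sBN) _.
  by rewrite imset_restrict.
have psiBE : {in A, restrict B psi =1 f}.
  by move=> a aA; rewrite ffunE (subsetP sAB) ?psiE.
have := maximal_pair_card maxA pairB (pair_le_extension sAB fPhi psiBE).
rewrite leqNgt proper_card //=.
by apply/properP; split => //; exists x => //; rewrite mem_gen // setU11.
Qed.

End NormalizerSubsystem.

Theorem corollary4p25 (gT : finGroupType) (p : nat) (S : {group gT})
    (F : fusion_system S) (H K : {group gT}) (R R' : {set pairT gT}) :
  prime p -> p.-group S -> saturated F p ->
  H \subset S -> fully_normalized F H -> centric F H -> centric F K ->
  is_HxFK F H K R -> is_NFxK F H K R R' ->
  forall pc, pc \in R' -> forall f, f \in pc.2 ->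
    pc.1 = NF_N F H K pc.1 f :&: H.
Proof.
move=> _ _ satF sHS _ _ /andP [sKS _] [maxR _] [sR'R _ _].
move=> [A Phi] pcR' f fPhi /=.
have maxA := maxR _ (subsetP sR'R _ pcR').
have /andP [/and4P [gA _ _ _] _] := maxA.
exact: (maximal_pair_NF_N sHS sKS (A := Group gA) satF maxA fPhi).
Qed.
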